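(* Let $\Gamma$ be a Deza graph with parameters $(n,k,k-1,a)$, $k>1$, $\beta=1$. Let $x$ be an $NA$-vertex and $y$ a vertex not in $\{x,x',x_b,x_b'\}$. Then either all possible edges between $\{x,x_b\}$ and $\{y,y_b\}$ are present, or there are no such edges.
   Context: A Deza graph with parameters $(n,k,b,a)$, $a\le b$, is a $k$-regular graph on $n$ vertices in which any two distinct vertices have $a$ or $b$ common neighbours; $\beta$ is the number of vertices $u\ne v$ with exactly $b$ common neighbours with a given vertex $v$. Since $\beta=1$, for each vertex $x$ let $x_b$ denote the unique vertex having $b=k-1$ common neighbours with $x$. A vertex $x$ is an $A$-vertex if $x$ is adjacent to $x_b$, and an $NA$-vertex otherwise. For an $NA$-vertex $x$, $x'$ denotes the unique neighbour of $x$ not adjacent to $x_b$, and $x_b'=(x')_b=(x_b)'$. *)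

From mathcomp Require Import all_boot.
Set Implicit Arguments. Unset Strict Implicit. Unset Printing Implicit Defensive.

Definition simple_graph (T : finType) (e : rel T) : Prop :=
  (forall x y, e x y = e y x) /\ (forall x, ~~ e x x).

Definition ncommon (T : finType) (e : rel T) (u v : T) : nat :=
  #|[set z | e u z && e v z]|.

Definition degree (T : finType) (e : rel T) (u : T) : nat :=
  #|[set z | e u z]|.

Definition deza (T : finType) (e : rel T) (n k b a : nat) : Prop :=
  [/\ simple_graph e, #|T| = n, a <= b,
      (forall u, degree e u = k) &
      (forall u v, u != v -> ncommon e u v = a \/ ncommon e u v = b)].

Definition beta (T : finType) (e : rel T) (b : nat) (v : T) : nat :=
  #|[set u | (u != v) && (ncommon e u v == b)]|.

(* xb is "x_b": the (unique, when beta = 1) vertex distinct from x with b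
   common neighbours with x *)
Definition is_bpartner (T : finType) (e : rel T) (b : nat) (x xb : T) : Prop :=
  xb != x /\ ncommon e x xb = b.

From mathcomp Require Import all_boot.
From mathcomp Require Import zify.

Set Implicit Arguments.
Unset Strict Implicit.

(* Write N(u) for the neighbourhood of u.  Since N(x) and N(x_b) share k - 1
   of their k vertices, N(x) = S + {x'} and N(x_b) = S + {w} for a common set S
   and "private" neighbours x' and w.  Every v outside {x, x_b} has a common
   neighbours with both x and x_b, so v is adjacent to x' exactly when it is
   adjacent to w.  Hence N(x') - {x} is contained in N(w), so x' and w have
   k - 1 common neighbours, which forces w = x_b'.  Thus x and x_b have the same
   neighbours outside {x', x_b'}, and y, y_b both lie outside {x', x_b'}.  If x
   were adjacent to exactly one of y and y_b, then x and x_b would both lie in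
   N(y) - N(y_b) or both in N(y_b) - N(y); each of these has at most one
   vertex, so x = x_b, a contradiction. *)

Section Graph.
Variables (T : finType) (e : rel T).

Local Notation nbr u := [set z | e u z].

Lemma ncommonE u v : ncommon e u v = #|nbr u :&: nbr v|.
Proof. by apply: eq_card => z; rewrite !inE. Qed.

Lemma ncommonC u v : ncommon e u v = ncommon e v u.
Proof. by apply: eq_card => z; rewrite !inE andbC. Qed.

Lemma ncommonD1 u v p : e u p ->
  ncommon e u v = e v p + #|(nbr u :\ p) :&: nbr v|.
Proof.
move=> up; rewrite ncommonE (cardsD1 p) !inE up.
by congr (_ + _); apply: eq_card => t; rewrite !inE andbA.
Qed.

Lemma is_bpartner_sym b x y : is_bpartner e b x y -> is_bpartner e b y x.
Proof. by case=> yx cxy; split; rewrite 1?eq_sym // ncommonC. Qed.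

Lemma bpartner_uniq b x u v : beta e b x = 1 ->
  is_bpartner e b x u -> is_bpartner e b x v -> u = v.
Proof.
move=> /eqP/cards1P[z Bz] [ux cxu] [vx cxv].
have inB w : w != x -> ncommon e x w = b -> w \in [set z].
  by move=> wx cxw; rewrite -Bz inE wx ncommonC cxw eqxx.
by move: (inB u ux cxu) (inB v vx cxv); rewrite !inE => /eqP-> /eqP->.
Qed.

Lemma bpartner_neq b u ub y yb : beta e b u = 1 -> beta e b ub = 1 ->
  is_bpartner e b u ub -> is_bpartner e b y yb -> y != u -> y != ub ->
  yb != u /\ yb != ub.
Proof.
move=> Bu Bub puub pyyb yu yub; split.
  apply: contraNneq yub => ybu; apply/eqP/(bpartner_uniq Bu) => //.
  by rewrite -ybu; apply: is_bpartner_sym.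
apply: contraNneq yu => ybub; apply/eqP/(bpartner_uniq Bub).
  by rewrite -ybub; apply: is_bpartner_sym.
exact: is_bpartner_sym.
Qed.

Lemma nbr_not_nbr_uniq u v p q : ncommon e u v = (degree e u).-1 ->
  e u p -> ~~ e v p -> e u q -> ~~ e v q -> p = q.
Proof.
move=> cuv up vp uq vq.
have le1 : #|nbr u :\: nbr v| <= 1.
  by move: (cardsID (nbr v) (nbr u)); rewrite -ncommonE cuv /degree; lia.
by apply: (card_le1_eqP le1); rewrite !inE ?up ?uq ?vp ?vq.
Qed.

Lemma deza_ncommon_nonpartner n k b a x xb v : deza e n k b a ->
  beta e b x = 1 -> is_bpartner e b x xb -> v != x -> v != xb ->
  ncommon e x v = a.
Proof.
case=> _ _ _ _ ncab B1 pxb vx vxb.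
have [//|cxv] := ncab x v ltac:(by rewrite eq_sym).
by move: vxb; rewrite (bpartner_uniq B1 (conj vx cxv) pxb) eqxx.
Qed.

End Graph.

Section Deza.
Variables (T : finType) (e : rel T) (n k a : nat).
Hypotheses (D : deza e n k k.-1 a) (B1 : forall v, beta e k.-1 v = 1).

Local Notation nbr u := [set z | e u z].

Lemma deza_adjC u v : e u v = e v u.
Proof. by case: D => [[eC _] _ _ _ _]. Qed.

Lemma deza_ncommon_partner u ub : is_bpartner e k.-1 u ub ->
  ncommon e u ub = (degree e u).-1.
Proof. by case: D => _ _ _ reg _ [_ ->]; rewrite reg. Qed.

Lemma adj_bpartner_eq y yb u1 u2 : is_bpartner e k.-1 y yb -> u1 != u2 ->
  e u1 y = e u2 y -> e u1 yb = e u2 yb -> e u1 y = e u1 yb.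
Proof.
move=> pyyb u12 u1y u1yb.
have uniqP p q u ub : is_bpartner e k.-1 u ub ->
    e u p -> ~~ e ub p -> e u q -> ~~ e ub q -> p = q.
  by move/deza_ncommon_partner; apply: nbr_not_nbr_uniq.
case u1yE : (e u1 y); case u1ybE : (e u1 yb) => //; case/negP: u12; apply/eqP.
  by apply: (uniqP _ _ _ _ pyyb); rewrite deza_adjC -?u1y -?u1yb ?u1yE ?u1ybE.
by apply: (uniqP _ _ _ _ (is_bpartner_sym pyyb));
  rewrite deza_adjC -?u1y -?u1yb ?u1yE ?u1ybE.
Qed.

Section NAvertex.
Variables (x xb x' : T).
Hypotheses (pxb : is_bpartner e k.-1 x xb) (xx' : e x x') (x'xb : ~~ e x' xb).

Lemma nbrD1_eq w : e xb w -> ~~ e x w -> nbr x :\ x' = nbr xb :\ w.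
Proof.
move=> xbw xw; have xbx' : ~~ e xb x' by rewrite deza_adjC.
have cx := deza_ncommon_partner pxb.
have cxb := deza_ncommon_partner (is_bpartner_sym pxb).
apply/setP => t; rewrite !inE.
have [->|tx'] := eqVneq t x'; first by rewrite (negbTE xbx') andbF.
have [->|tw] := eqVneq t w; first by rewrite (negbTE xw) andbF.
apply/idP/idP => [xt|xbt]; apply/negPn/negP => nt.
  by move: tx'; rewrite (nbr_not_nbr_uniq cx xt nt xx' xbx') eqxx.
by move: tw; rewrite (nbr_not_nbr_uniq cxb xbt nt xbw xw) eqxx.
Qed.

Lemma private_nbr_adj_eq w v : e xb w -> ~~ e x w ->
  v != x -> v != xb -> e x' v = e w v.
Proof.
move=> xbw xw vx vxb.
have := deza_ncommon_nonpartner D (B1 x) pxb vx vxb.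
have := deza_ncommon_nonpartner D (B1 xb) (is_bpartner_sym pxb) vxb vx.
rewrite (ncommonD1 _ xx') (ncommonD1 _ xbw) (nbrD1_eq xbw xw) !(deza_adjC v).
by case: (e x' v); case: (e w v) => /=; lia.
Qed.

Lemma private_nbr_bpartner w : e xb w -> ~~ e x w -> is_bpartner e k.-1 x' w.
Proof.
move=> xbw xw; split.
  by apply: contraNneq xw => ->.
have [_ _ _ reg _] := D.
have <- : #|nbr x' :\ x| = k.-1.
  by move: (cardsD1 x (nbr x')) (reg x'); rewrite !inE deza_adjC xx' /degree; lia.
apply: eq_card => t; rewrite !inE.
have [->|tx] := eqVneq t x; first by rewrite [e w x]deza_adjC (negbTE xw) andbF.
case x't : (e x' t) => //=; apply: esym.
rewrite -(private_nbr_adj_eq xbw xw tx) //.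
by apply: contraNneq x'xb => <-.
Qed.

Lemma adj_eq_off_private xb' z : is_bpartner e k.-1 x' xb' ->
  z != x' -> z != xb' -> e x z = e xb z.
Proof.
move=> px'xb' zx' zxb'; have xbx' : ~~ e xb x' by rewrite deza_adjC.
case xz : (e x z); case xbz : (e xb z) => //.
  have cx := deza_ncommon_partner pxb.
  by move: zx'; rewrite (nbr_not_nbr_uniq cx xz (negbT xbz) xx' xbx') eqxx.
have px'z := private_nbr_bpartner xbz (negbT xz).
by move: zxb'; rewrite (bpartner_uniq (B1 x') px'z px'xb') eqxx.
Qed.

End NAvertex.

End Deza.

Theorem lemma15 (T : finType) (e : rel T) (n k a : nat)
  (x xb x' xb' y yb : T) :
  deza e n k k.-1 a -> 1 < k ->
  (forall v, beta e k.-1 v = 1) ->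
  is_bpartner e k.-1 x xb ->
  ~~ e x xb ->                                   (* x is an NA-vertex *)
  e x x' -> ~~ e x' xb ->                        (* x' : the neighbour of x not adjacent to x_b *)
  is_bpartner e k.-1 x' xb' ->                   (* x_b' = (x')_b *)
  is_bpartner e k.-1 y yb ->
  y \notin [:: x; x'; xb; xb'] ->
  (e x y && e x yb && e xb y && e xb yb) \/
  (~~ e x y && ~~ e x yb && ~~ e xb y && ~~ e xb yb).
Proof.
move=> D _ B1 pxb _ xx' x'xb px'xb' pyyb.
rewrite !inE !negb_or => /and4P[_ yx' _ yxb'].
have [ybx' ybxb'] := bpartner_neq (B1 x') (B1 xb') px'xb' pyyb yx' yxb'.
have adjE := adj_eq_off_private D B1 pxb xx' x'xb px'xb'.
have xxb : x != xb by case: pxb; rewrite eq_sym.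
have := adj_bpartner_eq D pyyb xxb (adjE y yx' yxb') (adjE yb ybx' ybxb').
rewrite -(adjE y) // -(adjE yb) // => ->.
by case: (e x yb); [left | right].
Qed.
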